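(* For every Turing degree $\mathbf{d}$ there exist a finite alphabet $\Sigma$ and a minimal subshift $X \subseteq \Sigma^{\mathbb{Z}}$ such that the set $\{\deg_T x : x \in X\}$ of Turing degrees of the points of $X$ equals the cone $\{\mathbf{e} : \mathbf{e} \geq_T \mathbf{d}\}$.
   Context: For a finite alphabet $\Sigma$, the shift maps $\sigma_v$ on $\Sigma^{\mathbb{Z}^d}$ are defined by $\sigma_v(c)_x = c_{x+v}$; $\Sigma^{\mathbb{Z}^d}$ carries the product (Cantor) topology. A subshift is a closed subset of $\Sigma^{\mathbb{Z}^d}$ invariant under all shifts; its elements are called points. A subshift $X$ is minimal if it is nonempty and contains no nonempty subshift $Y \subsetneq X$ (equivalently, all points of $X$ contain the same finite patterns; equivalently, $X$ is the orbit closure of each of its points). The Turing degree of a point of $\Sigma^{\mathbb{Z}^d}$ is the Turing degree of the sequence obtained by listing its values along a fixed computable bijection $\mathbb{N} \to \mathbb{Z}^d$ (with symbols coded by a fixed computable coding). The cone above $\mathbf{d}$ is the set of degrees $\geq_T \mathbf{d}$. *)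

From Stdlib Require Import ZArith Arith List.
Import ListNotations.
Open Scope Z_scope.

Inductive rfun : Type :=
| RZero : rfun
| RSucc : rfun
| RProj : nat -> rfun
| ROracle : rfun
| RComp : rfun -> list rfun -> rfun
| RPrec : rfun -> rfun -> rfun
| RMu : rfun -> rfun.

Inductive eval (o : nat -> nat) : rfun -> list nat -> nat -> Prop :=
| ev_zero v : eval o RZero v 0
| ev_succ x v : eval o RSucc (x :: v) (S x)
| ev_proj i v : (i < length v)%nat -> eval o (RProj i) v (nth i v 0%nat)
| ev_oracle x v : eval o ROracle (x :: v) (o x)
| ev_comp f gs v ys y :
    evals o gs v ys -> eval o f ys y -> eval o (RComp f gs) v y
| ev_prec0 f g v y : eval o f v y -> eval o (RPrec f g) (0%nat :: v) y
| ev_precS f g n v r y :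
    eval o (RPrec f g) (n :: v) r -> eval o g (n :: r :: v) y ->
    eval o (RPrec f g) (S n :: v) y
| ev_mu f v n :
    eval o f (n :: v) 0%nat ->
    (forall m, (m < n)%nat -> exists k, eval o f (m :: v) (S k)) ->
    eval o (RMu f) v n
with evals (o : nat -> nat) : list rfun -> list nat -> list nat -> Prop :=
| evs_nil v : evals o [] v []
| evs_cons g gs v y ys :
    eval o g v y -> evals o gs v ys -> evals o (g :: gs) v (y :: ys).

Definition turing_le (A B : nat -> nat) : Prop :=
  exists p : rfun, forall n : nat, eval B p [n] (A n).

Definition turing_eq (A B : nat -> nat) : Prop :=
  turing_le A B /\ turing_le B A.

Definition config := Z -> nat.

Definition in_fullshift (k : nat) (c : config) : Prop :=
  forall z : Z, (c z < k)%nat.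

Definition shift (v : Z) (c : config) : config := fun x => c (x + v).

(** Product (Cantor) topology: X is closed in {0..k-1}^Z iff every point
    of the full shift all of whose central windows [-n,n] occur in points of
    X belongs to X. *)
Definition closed_set (k : nat) (X : config -> Prop) : Prop :=
  forall c : config, in_fullshift k c ->
    (forall n : nat, exists d : config, X d /\
        forall z : Z, - Z.of_nat n <= z <= Z.of_nat n -> d z = c z) ->
    X c.

Definition subshift (k : nat) (X : config -> Prop) : Prop :=
  (forall c, X c -> in_fullshift k c) /\
  closed_set k X /\
  (forall (v : Z) (c : config), X c -> X (shift v c)).

Definition minimal_subshift (k : nat) (X : config -> Prop) : Prop :=
  subshift k X /\ (exists c, X c) /\
  forall Y : config -> Prop, subshift k Y -> (exists c, Y c) ->
    (forall c, Y c -> X c) -> forall c, X c -> Y c.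

(** Fixed computable bijection nat -> Z: 0,-1,1,-2,2,... *)
Definition zenum (n : nat) : Z :=
  if Nat.even n then Z.of_nat (n / 2) else - Z.of_nat ((n + 1) / 2).

(** The sequence of values of c listed along zenum (symbols coded by
    themselves). Its Turing degree is the Turing degree of c. *)
Definition code (c : config) : nat -> nat := fun n => c (zenum n).

(* Encode [D] by the bits [b] of its graph and take the Toeplitz subshift over
   {0,1,2} built on 2-adic skeletons [r]: a position [z] with [z = r mod 2^L] but
   not mod [2^(L+1)] carries [2] if [L] is even, and [b (L/4)] or its complement if
   [L] is [1] or [3] mod [4].  Consecutive levels carry distinguishable symbols, so a
   point computes its skeleton by a search along its coordinates and then reads off
   [b], hence [D].  The subshift is minimal: a window of a point only sees finitely
   many levels and therefore reappears in every other point, and the one possible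
   hole of a skeleton is harmless because all three symbols recur at arbitrarily deep
   levels.  Conversely, for [E >= D] the skeleton whose binary digits are [g m] and
   [1 - g m], with [g] the graph bits of [E], has no hole and yields a point that is
   computable from [E] and computes [E]. *)

From Pilot Require Import Defs.
From Stdlib Require Import ZArith Arith List Lia Cantor ClassicalEpsilon Classical.
Import ListNotations.
Open Scope nat_scope.

(** * Computability relative to an oracle *)

Lemma length1 (v : list nat) : length v = 1 -> v = [nth 0 v 0].
Proof. destruct v as [|x [|]]; simpl; intros; auto; lia. Qed.

Lemma length2 (v : list nat) : length v = 2 -> v = [nth 0 v 0; nth 1 v 0].
Proof. destruct v as [|x [|y [|]]]; simpl; intros; auto; lia. Qed.

Lemma length3 (v : list nat) : length v = 3 -> v = [nth 0 v 0; nth 1 v 0; nth 2 v 0].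
Proof. destruct v as [|x [|y [|z [|]]]]; simpl; intros; auto; lia. Qed.

Definition computable_on (o : nat -> nat) (k : nat) (P : list nat -> Prop)
  (f : list nat -> nat) : Prop :=
  exists p, forall v, length v = k -> P v -> eval o p v (f v).

Notation computable o k f := (computable_on o k (fun _ => True) f).

Lemma computable_on_ext o k P Q f g : computable_on o k P f ->
  (forall v, length v = k -> Q v -> P v /\ f v = g v) -> computable_on o k Q g.
Proof.
  intros [p Hp] H. exists p. intros v Hl Hv. destruct (H v Hl Hv) as [HP <-]. auto.
Qed.

Lemma computable_on_eq o k Q f g :
  (forall v, f v = g v) -> computable_on o k Q g -> computable_on o k Q f.
Proof. intros E Hg. apply (computable_on_ext o k Q Q g f Hg). intros v _ HQ. auto. Qed.

Lemma turing_le_of_computable A B : computable B 1 (fun v => A (nth 0 v 0)) -> turing_le A B.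
Proof. intros [p Hp]. exists p. intros n. apply (Hp [n]); auto. Qed.

Lemma computable_of_turing_le A B : turing_le A B -> computable B 1 (fun v => A (nth 0 v 0)).
Proof. intros [p Hp]. exists p. intros v Hl _. rewrite (length1 v Hl). apply Hp. Qed.

Fixpoint const_rfun (n : nat) : rfun :=
  match n with 0 => RZero | S n => RComp RSucc [const_rfun n] end.

Lemma computable_on_const o k Q n : computable_on o k Q (fun _ => n).
Proof.
  exists (const_rfun n). intros v _ _. induction n; simpl; repeat econstructor; eauto.
Qed.

Lemma computable_on_proj o k Q i : i < k -> computable_on o k Q (fun v => nth i v 0).
Proof. intros Hi. exists (RProj i). intros v Hl _. constructor. lia. Qed.

Lemma computable_on_comp o m k P Q f (gs : list (list nat -> nat)) :
  computable_on o m P f -> length gs = m -> Forall (computable_on o k Q) gs ->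
  computable_on o k (fun v => Q v /\ P (map (fun g => g v) gs))
    (fun v => f (map (fun g => g v) gs)).
Proof.
  intros [pf Hf] Hlen Hgs.
  assert (Hps : exists ps, forall v, length v = k -> Q v ->
                  evals o ps v (map (fun g => g v) gs)).
  { clear Hlen. induction Hgs as [|g gs [pg Hg] _ [ps Hps]].
    - exists []. intros. constructor.
    - exists (pg :: ps). intros. simpl. constructor; auto. }
  destruct Hps as [ps Hps].
  exists (RComp pf ps). intros v Hl [HQ HP]. econstructor; [apply Hps; auto|].
  apply Hf; auto. rewrite length_map; auto.
Qed.

Lemma computable_on_app1 o k Q (F : nat -> nat) g :
  computable o 1 (fun v => F (nth 0 v 0)) -> computable_on o k Q g ->
  computable_on o k Q (fun v => F (g v)).
Proof.
  intros HF Hg. eapply computable_on_ext.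
  - apply (computable_on_comp o 1 k _ Q _ [g] HF eq_refl). repeat constructor; auto.
  - simpl. auto.
Qed.

Lemma computable_on_app2 o k Q (F : nat -> nat -> nat) g1 g2 :
  computable o 2 (fun v => F (nth 0 v 0) (nth 1 v 0)) ->
  computable_on o k Q g1 -> computable_on o k Q g2 ->
  computable_on o k Q (fun v => F (g1 v) (g2 v)).
Proof.
  intros HF Hg1 Hg2. eapply computable_on_ext.
  - apply (computable_on_comp o 2 k _ Q _ [g1; g2] HF eq_refl). repeat constructor; auto.
  - simpl. auto.
Qed.

Lemma computable_on_app3 o k Q (F : nat -> nat -> nat -> nat) g1 g2 g3 :
  computable o 3 (fun v => F (nth 0 v 0) (nth 1 v 0) (nth 2 v 0)) ->
  computable_on o k Q g1 -> computable_on o k Q g2 -> computable_on o k Q g3 ->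
  computable_on o k Q (fun v => F (g1 v) (g2 v) (g3 v)).
Proof.
  intros HF Hg1 Hg2 Hg3. eapply computable_on_ext.
  - apply (computable_on_comp o 3 k _ Q _ [g1; g2; g3] HF eq_refl). repeat constructor; auto.
  - simpl. auto.
Qed.

Lemma computable_on_succ o k Q g :
  computable_on o k Q g -> computable_on o k Q (fun v => S (g v)).
Proof.
  apply computable_on_app1. exists RSucc.
  intros v Hl _. rewrite (length1 v Hl). constructor.
Qed.

Lemma computable_on_oracle o k Q g :
  computable_on o k Q g -> computable_on o k Q (fun v => o (g v)).
Proof.
  apply computable_on_app1. exists ROracle.
  intros v Hl _. rewrite (length1 v Hl). constructor.
Qed.

Fixpoint primrec (f g : list nat -> nat) (n : nat) (w : list nat) : nat :=
  match n with 0 => f w | S n => g (n :: primrec f g n w :: w) end.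

Lemma computable_on_primrec o k Pf Pg f g :
  computable_on o k Pf f -> computable_on o (S (S k)) Pg g ->
  computable_on o (S k)
    (fun v => Pf (tl v) /\
       forall m, m < nth 0 v 0 -> Pg (m :: primrec f g m (tl v) :: tl v))
    (fun v => primrec f g (nth 0 v 0) (tl v)).
Proof.
  intros [pf Hf] [pg Hg]. exists (RPrec pf pg).
  intros [|n w] Hl [H1 H2]; simpl in *; [lia|]. injection Hl as Hl.
  induction n; simpl.
  - constructor. auto.
  - econstructor.
    + apply IHn. intros; apply H2; lia.
    + apply Hg; [simpl; lia|]. apply H2; lia.
Qed.

Lemma computable_primrec0 o (F : nat -> nat) (a : nat) (g : nat -> nat -> nat) :
  computable o 2 (fun v => g (nth 0 v 0) (nth 1 v 0)) ->
  F 0 = a -> (forall n, F (S n) = g n (F n)) ->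
  computable o 1 (fun v => F (nth 0 v 0)).
Proof.
  intros Hg H0 HS. eapply computable_on_ext.
  - apply (computable_on_primrec o 0 _ _ (fun _ => a) _ (computable_on_const o 0 (fun _ => True) a) Hg).
  - intros v Hl _. rewrite (length1 v Hl). simpl. split; [auto|].
    induction (nth 0 v 0); simpl; congruence.
Qed.

Lemma computable_primrec1 o (F : nat -> nat -> nat) (f : nat -> nat)
    (g : nat -> nat -> nat -> nat) :
  computable o 1 (fun v => f (nth 0 v 0)) ->
  computable o 3 (fun v => g (nth 0 v 0) (nth 1 v 0) (nth 2 v 0)) ->
  (forall y, F 0 y = f y) -> (forall n y, F (S n) y = g n (F n y) y) ->
  computable o 2 (fun v => F (nth 0 v 0) (nth 1 v 0)).
Proof.
  intros Hf Hg H0 HS. eapply computable_on_ext.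
  - apply (computable_on_primrec o 1 _ _ _ _ Hf Hg).
  - intros v Hl _. rewrite (length2 v Hl). simpl. split; [auto|].
    induction (nth 0 v 0); simpl; congruence.
Qed.

Lemma computable_on_mu o k Pf Q f h : computable_on o (S k) Pf f ->
  (forall v, length v = k -> Q v ->
     (forall n, n <= h v -> Pf (n :: v)) /\
     f (h v :: v) = 0 /\ forall m, m < h v -> f (m :: v) <> 0) ->
  computable_on o k Q h.
Proof.
  intros [pf Hf] H. exists (RMu pf). intros v Hl HQ.
  destruct (H v Hl HQ) as (H1 & H2 & H3). constructor.
  - rewrite <- H2. apply Hf; [simpl; lia|]. apply H1; lia.
  - intros m Hm. destruct (f (m :: v)) as [|n] eqn:E; [exfalso; eapply H3; eauto|].
    exists n. rewrite <- E. apply Hf; [simpl; lia|]. apply H1; lia.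
Qed.

Lemma computable_on_search o k Pf Q f : computable_on o (S k) Pf f ->
  (forall v, length v = k -> Q v -> (forall n, Pf (n :: v)) /\ exists n, f (n :: v) = 0) ->
  exists h, computable_on o k Q h /\ forall v, length v = k -> Q v -> f (h v :: v) = 0.
Proof.
  intros Hf H.
  set (least v n := f (n :: v) = 0 /\ forall m, f (m :: v) = 0 -> n <= m).
  assert (Hleast : forall v, length v = k -> Q v -> exists n, least v n).
  { intros v Hl HQ. destruct (H v Hl HQ) as [_ Hex].
    destruct (dec_inh_nat_subset_has_unique_least_element (fun n => f (n :: v) = 0))
      as [n [Hn _]]; eauto.
    intros n. destruct (Nat.eq_dec (f (n :: v)) 0); auto. }
  exists (fun v => epsilon (inhabits 0) (least v)).
  assert (Hh : forall v, length v = k -> Q v -> least v (epsilon (inhabits 0) (least v)))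
    by (intros; apply epsilon_spec; auto).
  split; [|intros v Hl HQ; apply Hh; auto].
  apply (computable_on_mu o k Pf Q f); [exact Hf|]. intros v Hl HQ.
  destruct (Hh v Hl HQ) as [H0 Hmin]. split; [intros n _; apply H; auto|split; auto].
  intros m Hm Hm0. specialize (Hmin m Hm0). lia.
Qed.

Lemma computable_on_pred o k Q g :
  computable_on o k Q g -> computable_on o k Q (fun v => pred (g v)).
Proof.
  apply computable_on_app1.
  apply (computable_primrec0 o pred 0 (fun n _ => n)); auto.
  apply computable_on_proj; lia.
Qed.

Lemma computable_on_add o k Q g1 g2 : computable_on o k Q g1 -> computable_on o k Q g2 ->
  computable_on o k Q (fun v => g1 v + g2 v).
Proof.
  apply computable_on_app2.
  apply (computable_primrec1 o Nat.add (fun y => y) (fun _ r _ => S r)); auto.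
  - apply computable_on_proj; lia.
  - apply computable_on_succ, computable_on_proj; lia.
Qed.

Lemma computable_on_sub o k Q g1 g2 : computable_on o k Q g1 -> computable_on o k Q g2 ->
  computable_on o k Q (fun v => g1 v - g2 v).
Proof.
  intros Hg1 Hg2. apply (computable_on_app2 o k Q (fun a b => b - a)); auto.
  apply (computable_primrec1 o (fun n y => y - n) (fun y => y) (fun _ r _ => pred r)).
  - apply computable_on_proj; lia.
  - apply computable_on_pred, computable_on_proj; lia.
  - intros; lia.
  - intros; lia.
Qed.

Lemma computable_on_mul o k Q g1 g2 : computable_on o k Q g1 -> computable_on o k Q g2 ->
  computable_on o k Q (fun v => g1 v * g2 v).
Proof.
  apply computable_on_app2.
  apply (computable_primrec1 o Nat.mul (fun _ => 0) (fun _ r y => y + r)); auto.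
  - apply computable_on_const.
  - apply computable_on_add; apply computable_on_proj; lia.
Qed.

Lemma computable_on_ifz o k Q g1 g2 g3 :
  computable_on o k Q g1 -> computable_on o k Q g2 -> computable_on o k Q g3 ->
  computable_on o k Q (fun v => match g1 v with 0 => g2 v | S _ => g3 v end).
Proof.
  apply (computable_on_app3 o k Q (fun a b c => match a with 0 => b | S _ => c end)).
  eapply computable_on_ext.
  - apply (computable_on_primrec o 2 (fun _ => True) (fun _ => True) (fun w => nth 0 w 0) (fun u => nth 3 u 0));
      apply computable_on_proj; lia.
  - intros v Hl _. rewrite (length3 v Hl). simpl.
    split; [auto|]. destruct (nth 0 v 0); auto.
Qed.

Lemma computable_on_pow o k Q g1 g2 : computable_on o k Q g1 -> computable_on o k Q g2 ->
  computable_on o k Q (fun v => g1 v ^ g2 v).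
Proof.
  intros Hg1 Hg2. apply (computable_on_app2 o k Q (fun n a => a ^ n)); auto.
  apply (computable_primrec1 o (fun n y => y ^ n) (fun _ => 1) (fun _ r y => y * r)); auto.
  - apply computable_on_const.
  - apply computable_on_mul; apply computable_on_proj; lia.
Qed.

Lemma computable_on_div o k Q g1 g2 : computable_on o k Q g1 -> computable_on o k Q g2 ->
  computable_on o k Q (fun v => g1 v / g2 v).
Proof.
  apply computable_on_app2.
  assert (Hdiv : computable o 2 (fun v => nth 0 v 0 / (nth 1 v 0 + (1 - nth 1 v 0)))).
  { apply (computable_on_mu o 2 (fun _ => True) _
      (fun u => (nth 1 u 0 + 1) - (nth 0 u 0 + 1) * (nth 2 u 0 + (1 - nth 2 u 0)))).
    - repeat first [apply computable_on_sub | apply computable_on_add | apply computable_on_mul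
                   | apply computable_on_const | apply computable_on_proj; lia].
    - intros v _ _. cbn [nth]. split; [auto|].
      set (x := nth 0 v 0). set (y := nth 1 v 0 + (1 - nth 1 v 0)).
      assert (Hy : y <> 0) by lia.
      pose proof (Nat.div_mod x y Hy). pose proof (Nat.mod_upper_bound x y Hy).
      split; [nia|]. intros m Hm. nia. }
  eapply computable_on_ext.
  - apply (computable_on_ifz o 2 (fun _ => True) (fun v => nth 1 v 0) (fun _ => 0)).
    + apply computable_on_proj; lia.
    + apply computable_on_const.
    + exact Hdiv.
  - intros v _ HQ. split; [auto|]. cbn beta.
    destruct (nth 1 v 0) as [|y]; [auto|]. f_equal. lia.
Qed.

Lemma computable_on_mod o k Q g1 g2 : computable_on o k Q g1 -> computable_on o k Q g2 ->
  computable_on o k Q (fun v => g1 v mod g2 v).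
Proof.
  intros Hg1 Hg2. eapply computable_on_ext.
  - apply (computable_on_sub o k Q g1 (fun v => g2 v * (g1 v / g2 v))); [exact Hg1|].
    apply (computable_on_mul o k Q g2 (fun v => g1 v / g2 v)); [exact Hg2|].
    apply computable_on_div; assumption.
  - intros v _ HQ. split; [auto|]. pose proof (Nat.div_mod_eq (g1 v) (g2 v)). lia.
Qed.

Lemma computable_on_if_even o k Q g1 g2 g3 :
  computable_on o k Q g1 -> computable_on o k Q g2 -> computable_on o k Q g3 ->
  computable_on o k Q (fun v => if Nat.even (g1 v) then g2 v else g3 v).
Proof.
  intros Hg1 Hg2 Hg3. eapply computable_on_ext.
  - apply (computable_on_ifz o k Q (fun v => g1 v mod 2) g2 g3); [|exact Hg2|exact Hg3].
    apply computable_on_mod; [exact Hg1|apply computable_on_const].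
  - intros v _ HQ. split; [auto|]. cbn beta.
    destruct (Nat.Even_or_Odd (g1 v)) as [[m ->]|[m ->]].
    + rewrite Nat.even_mul, Nat.mul_comm, Nat.Div0.mod_mul. auto.
    + rewrite Nat.add_comm, Nat.even_add_mul_2, Nat.mul_comm, Nat.Div0.mod_add. auto.
Qed.

Lemma computable_on_eqb o k Q g1 g2 : computable_on o k Q g1 -> computable_on o k Q g2 ->
  computable_on o k Q (fun v => Nat.b2n (Nat.eqb (g1 v) (g2 v))).
Proof.
  intros Hg1 Hg2. eapply computable_on_ext.
  - apply (computable_on_sub o k Q (fun _ => 1)
      (fun v => (g1 v - g2 v) + (g2 v - g1 v))); [apply computable_on_const|].
    apply computable_on_add; apply computable_on_sub; assumption.
  - intros v _ HQ. split; [auto|]. destruct (Nat.eqb_spec (g1 v) (g2 v)); cbn [Nat.b2n]; lia.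
Qed.

Lemma computable_on_to_nat o k Q g1 g2 : computable_on o k Q g1 -> computable_on o k Q g2 ->
  computable_on o k Q (fun v => to_nat (g1 v, g2 v)).
Proof.
  intros Hg1 Hg2. unfold to_nat.
  apply computable_on_add; [exact Hg2|].
  apply (computable_on_app1 o k Q (nat_rec _ 0 (fun i m => S i + m)));
    [|apply computable_on_add; auto].
  apply (computable_primrec0 o _ 0 (fun n r => S n + r)); auto.
  apply computable_on_add; [apply computable_on_succ|]; apply computable_on_proj; lia.
Qed.

Ltac computable_step :=
  match goal with
  | |- computable_on ?o ?k ?Q (fun v => if Nat.even (@?a v) then @?b v else @?c v) =>
      apply (computable_on_if_even o k Q a b c)
  | |- computable_on ?o ?k ?Q (fun v => Nat.b2n (Nat.eqb (@?a v) (@?b v))) =>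
      apply (computable_on_eqb o k Q a b)
  | |- computable_on ?o ?k ?Q (fun v => to_nat (@?a v, @?b v)) =>
      apply (computable_on_to_nat o k Q a b)
  | |- computable_on ?o ?k ?Q (fun v => @?a v + @?b v) => apply (computable_on_add o k Q a b)
  | |- computable_on ?o ?k ?Q (fun v => @?a v - @?b v) => apply (computable_on_sub o k Q a b)
  | |- computable_on ?o ?k ?Q (fun v => @?a v * @?b v) => apply (computable_on_mul o k Q a b)
  | |- computable_on ?o ?k ?Q (fun v => @?a v / @?b v) => apply (computable_on_div o k Q a b)
  | |- computable_on ?o ?k ?Q (fun v => @?a v mod @?b v) => apply (computable_on_mod o k Q a b)
  | |- computable_on ?o ?k ?Q (fun v => @?a v ^ @?b v) => apply (computable_on_pow o k Q a b)
  | |- computable_on ?o ?k ?Q (fun v => S (@?a v)) => apply (computable_on_succ o k Q a)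
  | |- computable_on ?o ?k ?Q (fun v => ?o (@?a v)) => apply (computable_on_oracle o k Q a)
  | |- computable_on ?o ?k ?Q (fun v => nth ?i v 0) =>
      apply (computable_on_proj o k Q i); simpl; lia
  | |- computable_on ?o ?k ?Q (fun v => ?n) => apply (computable_on_const o k Q n)
  | H : computable_on ?o 1 (fun _ => True) (fun v => ?F (nth 0 v 0))
    |- computable_on ?o ?k ?Q (fun v => ?F (@?a v)) =>
      apply (computable_on_app1 o k Q F a H)
  | H : computable_on ?o 2 (fun _ => True) (fun v => ?F (nth 0 v 0) (nth 1 v 0))
    |- computable_on ?o ?k ?Q (fun v => ?F (@?a v) (@?b v)) =>
      apply (computable_on_app2 o k Q F a b H)
  end.

Ltac computable_tac := repeat first [assumption | computable_step].

(** * Toeplitz subshifts over 2-adic skeletons *)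

Definition zpow2 (j : nat) : Z := Z.of_nat (2 ^ j).

Lemma pow2_pos j : 0 < 2 ^ j.
Proof. apply Nat.neq_0_lt_0, Nat.pow_nonzero; lia. Qed.

Lemma zpow2_pos j : (0 < zpow2 j)%Z.
Proof. unfold zpow2. pose proof (pow2_pos j). lia. Qed.

Lemma mod_pow2_le x i j : i <= j -> (x mod 2 ^ j) mod 2 ^ i = x mod 2 ^ i.
Proof.
  intros Hij. replace j with (i + (j - i)) by lia.
  rewrite Nat.pow_add_r, Nat.Div0.mod_mul_r, Nat.mul_comm, Nat.Div0.mod_add.
  apply Nat.Div0.mod_mod.
Qed.

Definition two_adic (r : nat -> nat) : Prop :=
  forall j, r j < 2 ^ j /\ r (S j) mod 2 ^ j = r j.

Definition congr_at (r : nat -> nat) (z : Z) (j : nat) : Prop :=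
  (z mod zpow2 j = Z.of_nat (r j))%Z.

Definition level (r : nat -> nat) (z : Z) (L : nat) : Prop :=
  congr_at r z L /\ ~ congr_at r z (S L).

Definition binary (b : nat -> nat) : Prop := forall i, b i <= 1.

Definition symbol (b : nat -> nat) (L : nat) : nat :=
  if Nat.even L then 2 else if Nat.even (L / 2) then b (L / 4) else 1 - b (L / 4).

(* The only position without a level is the integer (if any) equal to the
   2-adic integer [r]; its symbol is unconstrained. *)
Definition toeplitz (b r : nat -> nat) (c : config) : Prop :=
  forall L z, level r z L -> c z = symbol b L.

Definition toeplitz_subshift (b : nat -> nat) (c : config) : Prop :=
  in_fullshift 3 c /\ exists r, two_adic r /\ toeplitz b r c.

Section TwoAdic.
Variable r : nat -> nat.
Hypothesis Hr : two_adic r.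

Lemma two_adic_mod i j : i <= j -> r j mod 2 ^ i = r i.
Proof.
  induction 1.
  - apply Nat.mod_small, Hr.
  - rewrite <- (mod_pow2_le (r (S m)) i m) by auto. now rewrite (proj2 (Hr m)).
Qed.

Lemma two_adic_0 : r 0 = 0.
Proof. destruct (Hr 0) as [H _]. simpl in H. lia. Qed.

Lemma congr_at_of_nat (w : nat) j : congr_at r (Z.of_nat w) j <-> w mod 2 ^ j = r j.
Proof. unfold congr_at, zpow2. rewrite <- Nat2Z.inj_mod. lia. Qed.

Lemma congr_at_le z i j : i <= j -> congr_at r z j -> congr_at r z i.
Proof.
  unfold congr_at. intros Hij H.
  rewrite <- (Z.mod_mod_divide z (zpow2 j) (zpow2 i)).
  - rewrite H. unfold zpow2. rewrite <- Nat2Z.inj_mod. f_equal. now apply two_adic_mod.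
  - exists (Z.of_nat (2 ^ (j - i))). unfold zpow2. rewrite <- Nat2Z.inj_mul, <- Nat.pow_add_r.
    f_equal. f_equal. lia.
Qed.

Lemma congr_at_0 z : congr_at r z 0.
Proof. unfold congr_at, zpow2. rewrite two_adic_0. apply Z.mod_1_r. Qed.

Lemma level_exists z J : ~ congr_at r z J -> exists L, L < J /\ level r z L.
Proof.
  induction J as [|J IH]; intros H.
  - exfalso. apply H, congr_at_0.
  - destruct (classic (congr_at r z J)) as [HJ|HJ].
    + exists J. split; [lia|]. split; auto.
    + destruct (IH HJ) as [L [HL1 HL2]]. exists L. split; [lia|auto].
Qed.

Lemma level_unique z L L' : level r z L -> level r z L' -> L = L'.
Proof.
  intros [H1 H2] [H1' H2'].
  destruct (Nat.lt_trichotomy L L') as [H|[H|H]]; auto; exfalso.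
  - apply H2. eapply congr_at_le; eauto.
  - apply H2'. eapply congr_at_le; eauto.
Qed.

End TwoAdic.

Section Symbols.
Variable b : nat -> nat.
Hypothesis Hb : binary b.

Lemma symbol_lt_3 L : symbol b L < 3.
Proof.
  unfold symbol. specialize (Hb (L / 4)).
  destruct (Nat.even L); [lia|]. destruct (Nat.even (L / 2)); lia.
Qed.

Lemma symbol_odd L : Nat.even L = false -> symbol b L <= 1.
Proof.
  unfold symbol. intros ->. specialize (Hb (L / 4)). destruct (Nat.even (L / 2)); lia.
Qed.

Lemma symbol_even L : Nat.even L = true -> symbol b L = 2.
Proof. unfold symbol. now intros ->. Qed.

Lemma symbol_succ_neq L : symbol b L <> symbol b (S L).
Proof.
  destruct (Nat.even L) eqn:E.
  - rewrite (symbol_even L E). pose proof (symbol_odd (S L)).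
    rewrite Nat.even_succ, <- Nat.negb_even, E in H. simpl in H. lia.
  - rewrite (symbol_even (S L)) by (rewrite Nat.even_succ, <- Nat.negb_even, E; auto).
    pose proof (symbol_odd L E). lia.
Qed.

Lemma symbol_4m1 m : symbol b (4 * m + 1) = b m.
Proof.
  unfold symbol.
  replace (4 * m + 1) with (1 + 2 * (2 * m)) by lia. rewrite Nat.even_add_mul_2.
  replace ((1 + 2 * (2 * m)) / 2) with (2 * m) by (apply Nat.div_unique with 1; lia).
  replace ((1 + 2 * (2 * m)) / 4) with m by (apply Nat.div_unique with 1; lia).
  now rewrite Nat.even_mul.
Qed.

Lemma symbol_4m3 m : symbol b (4 * m + 3) = 1 - b m.
Proof.
  unfold symbol.
  replace (4 * m + 3) with (1 + 2 * (1 + 2 * m)) by lia. rewrite Nat.even_add_mul_2.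
  replace ((1 + 2 * (1 + 2 * m)) / 2) with (1 + 2 * m)
    by (apply Nat.div_unique with 1; lia).
  replace ((1 + 2 * (1 + 2 * m)) / 4) with m by (apply Nat.div_unique with 3; lia).
  now rewrite Nat.even_add_mul_2.
Qed.

Lemma symbol_above J s : s < 3 -> exists K, J <= K /\ symbol b K = s.
Proof.
  intros Hs. destruct (Nat.eq_dec s 2) as [->|Hs2].
  - exists (2 * J). split; [lia|]. apply symbol_even. apply Nat.even_mul.
  - destruct (Nat.eq_dec (b J) s).
    + exists (4 * J + 1). split; [lia|]. now rewrite symbol_4m1.
    + exists (4 * J + 3). split; [lia|]. rewrite symbol_4m3. specialize (Hb J). lia.
Qed.

End Symbols.

(* Flipping bit [L] of [r (S L)] gives the other lift of [r L] modulo [2 ^ S L]. *)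
Definition level_witness (r : nat -> nat) (L : nat) : nat := (r (S L) + 2 ^ L) mod 2 ^ S L.

Lemma level_witness_lift r L : two_adic r ->
  level_witness r L < 2 ^ S L /\ level_witness r L <> r (S L) /\
  level_witness r L mod 2 ^ L = r L.
Proof.
  intros Hr. destruct (Hr (S L)) as [H1 _]. destruct (Hr L) as [_ H2].
  unfold level_witness. rewrite Nat.pow_succ_r' in *. set (M := 2 ^ L) in *.
  assert (HM : 0 < M) by apply pow2_pos.
  split; [apply Nat.mod_upper_bound; lia|]. rewrite <- H2.
  destruct (Nat.ltb_spec (r (S L)) M).
  - rewrite Nat.mod_small by lia. split; [lia|].
    replace (r (S L) + M) with (r (S L) + 1 * M) by lia. apply Nat.Div0.mod_add.
  - replace (r (S L) + M) with ((r (S L) - M) + 1 * (2 * M)) by lia.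
    rewrite Nat.Div0.mod_add, Nat.mod_small by lia. split; [lia|].
    replace (r (S L)) with ((r (S L) - M) + 1 * M) at 2 by lia.
    now rewrite Nat.Div0.mod_add.
Qed.

Lemma level_witness_spec r L : two_adic r -> level r (Z.of_nat (level_witness r L)) L.
Proof.
  intros Hr. destruct (level_witness_lift r L Hr) as (F1 & F2 & F3).
  unfold level. rewrite !congr_at_of_nat by auto. split; [auto|].
  rewrite Nat.mod_small; auto.
Qed.

Lemma toeplitz_skeleton_unique b r s d d' j : binary b -> two_adic r -> two_adic s ->
  toeplitz b r d -> toeplitz b s d' ->
  (forall w, w < 2 ^ S j -> d (Z.of_nat w) = d' (Z.of_nat w)) -> r j = s j.
Proof.
  intros Hb Hr Hs Hd Hd'. induction j as [|j IH]; intros Hagree.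
  - now rewrite !two_adic_0.
  - assert (Hj : r j = s j).
    { apply IH. intros w Hw. apply Hagree. rewrite (Nat.pow_succ_r' 2 (S j)). lia. }
    destruct (Nat.eq_dec (r (S j)) (s (S j))) as [E|E]; auto. exfalso.
    destruct (level_witness_spec r (S j) Hr) as [HL1 HL2].
    destruct (level_witness_lift r (S j) Hr) as [Hw _].
    set (w := level_witness r (S j)) in *.
    assert (Hv1 : d (Z.of_nat w) = symbol b (S j)) by (apply Hd; split; auto).
    assert (Hv2 : d' (Z.of_nat w) = symbol b j).
    { apply Hd'. split.
      - apply congr_at_of_nat; auto. rewrite <- Hj. apply congr_at_of_nat; auto.
        apply (congr_at_le r Hr _ j (S j)); auto.
      - rewrite congr_at_of_nat by auto. rewrite congr_at_of_nat in HL1 by auto. lia. }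
    apply (symbol_succ_neq b Hb j). rewrite <- Hv1, <- Hv2. symmetry. now apply Hagree.
Qed.

Lemma Zmod_add_iff (M a v z : Z) : (0 < M -> 0 <= a < M ->
  ((z + v) mod M = a <-> z mod M = (a - v) mod M))%Z.
Proof.
  intros HM Ha. rewrite <- (Z.mod_small a M) at 1 by lia.
  rewrite !Z.cong_iff_ex. split; intros [n Hn]; exists n; lia.
Qed.

Lemma toeplitz_subshift_shift b v c : toeplitz_subshift b c -> toeplitz_subshift b (Defs.shift v c).
Proof.
  intros [H3 [r [Hr Hc]]]. split; [intros z; apply H3|].
  set (r' j := Z.to_nat ((Z.of_nat (r j) - v) mod zpow2 j)).
  assert (Hr' : forall j, Z.of_nat (r' j) = ((Z.of_nat (r j) - v) mod zpow2 j)%Z).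
  { intros j. unfold r'. rewrite Z2Nat.id; auto. apply Z.mod_pos_bound, zpow2_pos. }
  assert (Hcongr : forall z j, congr_at r' z j <-> congr_at r (z + v)%Z j).
  { intros z j. unfold congr_at. rewrite Hr'. symmetry. apply Zmod_add_iff.
    - apply zpow2_pos.
    - destruct (Hr j) as [H _]. unfold zpow2. lia. }
  exists r'. split.
  - intros j. split.
    + pose proof (Z.mod_pos_bound (Z.of_nat (r j) - v) (zpow2 j) (zpow2_pos j)) as H.
      rewrite <- Hr' in H. unfold zpow2 in H. lia.
    + apply Nat2Z.inj. rewrite Nat2Z.inj_mod, !Hr'. fold (zpow2 j).
      rewrite Z.mod_mod_divide by (exists 2%Z; unfold zpow2; rewrite Nat.pow_succ_r'; lia).
      apply Z.cong_iff_ex.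
      destruct (Hr j) as [Hlt Hmod].
      assert (H : (Z.of_nat (r (S j)) mod zpow2 j = Z.of_nat (r j) mod zpow2 j)%Z).
      { unfold zpow2. rewrite <- !Nat2Z.inj_mod, Hmod, Nat.mod_small; auto. }
      apply Z.cong_iff_ex in H. destruct H as [n Hn]. exists n. lia.
  - intros j z [H1 H2]. unfold Defs.shift. apply Hc. split.
    + now apply Hcongr.
    + now rewrite <- Hcongr.
Qed.

Lemma toeplitz_subshift_closed b : binary b -> closed_set 3 (toeplitz_subshift b).
Proof.
  intros Hb c Hc Hwin. split; auto.
  assert (Happrox : forall j, exists p : config * (nat -> nat),
     two_adic (snd p) /\ toeplitz b (snd p) (fst p) /\
     forall z, (- Z.of_nat (2 ^ S j) <= z <= Z.of_nat (2 ^ S j))%Z -> fst p z = c z).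
  { intros j. destruct (Hwin (2 ^ S j)) as [d [[_ [s [Hs Hd]]] Hag]]. now exists (d, s). }
  destruct (choice _ Happrox) as [f Hf].
  (* A window of radius [2 ^ S i] determines the skeleton modulo [2 ^ i]. *)
  set (r j := snd (f j) j).
  assert (Hcons : forall i j, i <= j -> snd (f j) i = r i).
  { intros i j Hij. destruct (Hf i) as (A1 & A2 & A3). destruct (Hf j) as (B1 & B2 & B3).
    apply (toeplitz_skeleton_unique b _ _ (fst (f j)) (fst (f i)) i Hb B1 A1 B2 A2).
    intros w Hw. assert (2 ^ S i <= 2 ^ S j) by (apply Nat.pow_le_mono_r; lia).
    rewrite A3, B3; lia. }
  exists r. split.
  - intros j. split.
    + apply (proj1 (Hf j)).
    + rewrite <- (Hcons j (S j)) by lia. apply (proj1 (Hf (S j))).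
  - intros j z [H1 H2].
    set (K := S j + Z.to_nat (Z.abs z)).
    destruct (Hf K) as (B1 & B2 & B3). rewrite <- B3.
    + apply B2. unfold level, congr_at in *. rewrite !Hcons by lia. auto.
    + assert (K < 2 ^ K) by (apply Nat.pow_gt_lin_r; lia).
      assert (2 ^ K <= 2 ^ S K) by (apply Nat.pow_le_mono_r; lia). lia.
Qed.

Lemma congr_at_window_unique r z1 z2 J (n : nat) : (2 * Z.of_nat n < zpow2 J)%Z ->
  (- Z.of_nat n <= z1 <= Z.of_nat n)%Z -> (- Z.of_nat n <= z2 <= Z.of_nat n)%Z ->
  congr_at r z1 J -> congr_at r z2 J -> z1 = z2.
Proof.
  unfold congr_at. intros HJ H1 H2 C1 C2. rewrite <- C2 in C1.
  apply Z.cong_iff_ex in C1. destruct C1 as [k Hk].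
  assert (k = 0 \/ k >= 1 \/ k <= -1)%Z as [->|[Hk1|Hk1]] by lia; nia.
Qed.

Section WindowOccurrence.
Variables (b r s : nat -> nat) (c y : config).
Hypotheses (Hb : binary b) (Hr : two_adic r) (Hs : two_adic s)
  (Hc : toeplitz b r c) (Hy : toeplitz b s y).

Lemma congr_at_translate T m z i : i <= m ->
  congr_at s (z + (Z.of_nat (s m) - Z.of_nat T))%Z i <->
  (z mod zpow2 i = Z.of_nat (T mod 2 ^ i))%Z.
Proof.
  intros Him. unfold congr_at. rewrite Zmod_add_iff.
  2: apply zpow2_pos.
  2: destruct (Hs i); unfold zpow2; lia.
  replace (Z.of_nat (s i) - (Z.of_nat (s m) - Z.of_nat T))%Z
    with (Z.of_nat T + (Z.of_nat (s i) - Z.of_nat (s m)))%Z by lia.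
  unfold zpow2. rewrite Nat2Z.inj_mod, Zplus_mod.
  replace ((Z.of_nat (s i) - Z.of_nat (s m)) mod Z.of_nat (2 ^ i))%Z with 0%Z.
  - now rewrite Z.add_0_r, Z.mod_mod by (pose proof (pow2_pos i); lia).
  - symmetry. apply Z.cong_iff_0. rewrite <- !Nat2Z.inj_mod.
    now rewrite (two_adic_mod s Hs i m Him), Nat.mod_small by apply Hs.
Qed.

Lemma translate_level T m z L : S L <= m ->
  (forall i, i <= S L -> T mod 2 ^ i = r i) -> level r z L ->
  y (z + (Z.of_nat (s m) - Z.of_nat T))%Z = symbol b L.
Proof.
  intros HLm HT [H1 H2]. apply Hy. split.
  - rewrite congr_at_translate, HT by lia. auto.
  - rewrite congr_at_translate, HT by lia. auto.
Qed.

Lemma translate_hole K z : (forall i, congr_at r z i) ->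
  y (z + (Z.of_nat (s (S K)) - Z.of_nat (level_witness r K)))%Z = symbol b K.
Proof.
  intros Hz. destruct (level_witness_lift r K Hr) as (F1 & F2 & F3).
  apply Hy. split.
  - rewrite congr_at_translate, F3 by lia. apply Hz.
  - rewrite congr_at_translate, Nat.mod_small, (Hz (S K)) by lia. lia.
Qed.

Variable n : nat.
Let window z := (- Z.of_nat n <= z <= Z.of_nat n)%Z.

Lemma window_occurs_of_levels M :
  (forall z, window z -> exists L, L < M /\ level r z L) ->
  exists v, forall z, window z -> y (z + v)%Z = c z.
Proof.
  intros Hlev. exists (Z.of_nat (s M) - Z.of_nat (r M))%Z. intros z Hz.
  destruct (Hlev z Hz) as [L [HLM HL]].
  rewrite (translate_level (r M) M z L); [symmetry; now apply Hc|lia| |auto].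
  intros i Hi. apply two_adic_mod; auto. lia.
Qed.

Lemma window_occurs_with_hole zs : window zs -> (forall i, congr_at r zs i) -> c zs < 3 ->
  exists v, forall z, window z -> y (z + v)%Z = c z.
Proof.
  intros Hzs Hhole Hc3.
  set (J := S (2 * n)).
  assert (HJ : (2 * Z.of_nat n < zpow2 J)%Z).
  { assert (J < 2 ^ J) by (apply Nat.pow_gt_lin_r; lia). unfold zpow2, J in *. lia. }
  destruct (symbol_above b Hb J (c zs) Hc3) as [K [HJK HK]].
  set (T := level_witness r K).
  exists (Z.of_nat (s (S K)) - Z.of_nat T)%Z. intros z Hz.
  destruct (Z.eq_dec z zs) as [->|Hne]; [now rewrite translate_hole|].
  assert (HzJ : ~ congr_at r z J)
    by (intros C; apply Hne; eapply congr_at_window_unique; eauto).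
  destruct (level_exists r Hr z J HzJ) as [L [HLJ HL]].
  rewrite (translate_level T (S K) z L); [symmetry; now apply Hc|lia| |auto].
  intros i Hi. destruct (level_witness_lift r K Hr) as (_ & _ & F3).
  unfold T. rewrite <- (mod_pow2_le _ i K), F3 by lia. apply two_adic_mod; auto. lia.
Qed.

Lemma window_occurs : in_fullshift 3 c -> exists v, forall z, window z -> y (z + v)%Z = c z.
Proof.
  intros Hc3. set (J := S (2 * n)).
  assert (HJ : (2 * Z.of_nat n < zpow2 J)%Z).
  { assert (J < 2 ^ J) by (apply Nat.pow_gt_lin_r; lia). unfold zpow2, J in *. lia. }
  destruct (classic (exists zs, window zs /\ congr_at r zs J)) as [[zs [Hzs Czs]]|Hno].
  - destruct (classic (forall i, congr_at r zs i)) as [Hhole|Hnh].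
    + now apply (window_occurs_with_hole zs).
    + apply not_all_ex_not in Hnh. destruct Hnh as [i Hi].
      destruct (level_exists r Hr zs i Hi) as [Ls [_ HLs]].
      apply (window_occurs_of_levels (J + S Ls)). intros z Hz.
      destruct (classic (congr_at r z J)) as [C|C].
      * assert (z = zs) as -> by (eapply congr_at_window_unique; eauto).
        exists Ls. split; [lia|auto].
      * destruct (level_exists r Hr z J C) as [L [HL1 HL2]]. exists L. split; [lia|auto].
  - apply (window_occurs_of_levels J). intros z Hz.
    assert (C : ~ congr_at r z J) by (intros C; apply Hno; eauto).
    exact (level_exists r Hr z J C).
Qed.

End WindowOccurrence.

Lemma toeplitz_subshift_minimal b : binary b ->
  forall Y : config -> Prop, subshift 3 Y -> (exists c, Y c) ->
  (forall c, Y c -> toeplitz_subshift b c) -> forall c, toeplitz_subshift b c -> Y c.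
Proof.
  intros Hb Y [_ [HYclosed HYshift]] [y Hy] HYX c [Hc3 [r [Hr Hrc]]].
  destruct (HYX y Hy) as [_ [s [Hs Hsy]]].
  apply HYclosed; [exact Hc3|]. intros n.
  destruct (window_occurs b r s c y Hb Hr Hs Hrc Hsy n Hc3) as [v Hv].
  exists (Defs.shift v y). split; [now apply HYshift|].
  intros z Hz. unfold Defs.shift. now apply Hv.
Qed.

(** * Turing degrees of points *)

(* Digits [2m] and [2m+1] are [g m] and [1 - g m]: the resulting 2-adic integer
   encodes [g] and is not an integer, so the Toeplitz point it defines has no hole. *)
Definition adic_digit (g : nat -> nat) (j : nat) : nat :=
  if Nat.even j then g (j / 2) else 1 - g (j / 2).

Fixpoint adic_of_bits (g : nat -> nat) (j : nat) : nat :=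
  match j with 0 => 0 | S j => adic_of_bits g j + adic_digit g j * 2 ^ j end.

Section AdicOfBits.
Variable g : nat -> nat.
Hypothesis Hg : binary g.

Lemma adic_of_bits_two_adic : two_adic (adic_of_bits g).
Proof.
  assert (Hlt : forall j, adic_of_bits g j < 2 ^ j).
  { induction j as [|j IH]; simpl; [lia|].
    assert (adic_digit g j <= 1) by (unfold adic_digit; specialize (Hg (j / 2));
                                     destruct (Nat.even j); lia).
    nia. }
  intros j. split; [auto|]. simpl. rewrite Nat.Div0.mod_add. now apply Nat.mod_small.
Qed.

Lemma adic_digit_even m : adic_digit g (2 * m) = g m.
Proof.
  unfold adic_digit. replace (2 * m / 2) with m by (apply Nat.div_unique with 0; lia).
  now rewrite Nat.even_mul.
Qed.

Lemma adic_digit_odd m : adic_digit g (2 * m + 1) = 1 - g m.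
Proof.
  unfold adic_digit. replace (2 * m + 1) with (1 + 2 * m) by lia.
  replace ((1 + 2 * m) / 2) with m by (apply Nat.div_unique with 1; lia).
  now rewrite Nat.even_add_mul_2.
Qed.

Lemma adic_of_bits_level_exists z : exists L, level (adic_of_bits g) z L.
Proof.
  set (m := Z.to_nat (Z.abs z)). set (Q := 2 ^ (2 * m)).
  assert (Hm : (Z.abs z < Z.of_nat Q)%Z).
  { assert (m < 2 ^ m) by (apply Nat.pow_gt_lin_r; lia).
    assert (2 ^ m <= Q) by (apply Nat.pow_le_mono_r; lia). lia. }
  assert (Hrange : Q <= adic_of_bits g (2 * m + 2) < 3 * Q).
  { replace (2 * m + 2) with (S (S (2 * m))) by lia. cbn [adic_of_bits].
    replace (S (2 * m)) with (2 * m + 1) by lia.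
    rewrite adic_digit_even, adic_digit_odd, Nat.pow_add_r.
    pose proof (proj1 (adic_of_bits_two_adic (2 * m))). fold Q in H |- *.
    specialize (Hg m). assert (g m = 0 \/ g m = 1) as [E|E] by lia; rewrite E, Nat.pow_1_r; lia. }
  assert (C : ~ congr_at (adic_of_bits g) z (2 * m + 2)).
  { unfold congr_at, zpow2.
    replace (2 ^ (2 * m + 2)) with (4 * Q) by (unfold Q; rewrite Nat.pow_add_r; simpl; lia).
    destruct (Z_le_gt_dec 0 z).
    - rewrite Z.mod_small by lia. lia.
    - rewrite <- (Z.mod_add z 1 (Z.of_nat (4 * Q))) by lia. rewrite Z.mod_small by lia. lia. }
  destruct (level_exists _ adic_of_bits_two_adic z _ C) as [L [_ HL]]. eauto.
Qed.

End AdicOfBits.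

Definition bits_level (g : nat -> nat) (z : Z) : nat :=
  epsilon (inhabits 0) (level (adic_of_bits g) z).

Definition toeplitz_point (b g : nat -> nat) : config := fun z => symbol b (bits_level g z).

Lemma bits_level_spec g z : binary g -> level (adic_of_bits g) z (bits_level g z).
Proof. intros Hg. unfold bits_level. apply epsilon_spec, adic_of_bits_level_exists, Hg. Qed.

Lemma toeplitz_point_toeplitz b g : binary g -> toeplitz b (adic_of_bits g) (toeplitz_point b g).
Proof.
  intros Hg L z HL. unfold toeplitz_point. f_equal.
  apply (level_unique _ (adic_of_bits_two_adic g Hg) z); auto. now apply bits_level_spec.
Qed.

Lemma toeplitz_point_in_subshift b g : binary b -> binary g ->
  toeplitz_subshift b (toeplitz_point b g).
Proof.
  intros Hb Hg. split.
  - intros z. now apply symbol_lt_3.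
  - exists (adic_of_bits g). split; [now apply adic_of_bits_two_adic|].
    now apply toeplitz_point_toeplitz.
Qed.

Definition zenum_mod (n j : nat) : nat := Z.to_nat (zenum n mod zpow2 j).

Lemma congr_at_zenum r n j : congr_at r (zenum n) j <-> zenum_mod n j = r j.
Proof.
  unfold congr_at, zenum_mod. pose proof (Z.mod_pos_bound (zenum n) _ (zpow2_pos j)). lia.
Qed.

Lemma zenum_double w : zenum (2 * w) = Z.of_nat w.
Proof.
  unfold zenum. rewrite Nat.even_mul, Nat.mul_comm, Nat.div_mul; auto.
Qed.

(* [- k] is congruent to [k * (2 ^ j - 1)] modulo [2 ^ j]. *)
Lemma zenum_mod_arith n j : zenum_mod n j =
  if Nat.even n then (n / 2) mod 2 ^ j else ((n + 1) / 2 * (2 ^ j - 1)) mod 2 ^ j.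
Proof.
  unfold zenum_mod, zenum, zpow2. pose proof (pow2_pos j).
  destruct (Nat.even n).
  - rewrite <- Nat2Z.inj_mod. lia.
  - apply Nat2Z.inj. rewrite Z2Nat.id by (apply Z.mod_pos_bound; lia).
    rewrite Nat2Z.inj_mod. apply Z.cong_iff_ex. exists (- Z.of_nat ((n + 1) / 2))%Z.
    rewrite Nat2Z.inj_mul, Nat2Z.inj_sub by lia. lia.
Qed.

Lemma computable_zenum_mod o : computable o 2 (fun v => zenum_mod (nth 0 v 0) (nth 1 v 0)).
Proof.
  apply (computable_on_eq o 2 _ _ _ (fun v => zenum_mod_arith (nth 0 v 0) (nth 1 v 0))).
  computable_tac.
Qed.

Definition lift_test (O : nat -> nat) (n j x : nat) : nat :=
  (zenum_mod n j - x) + (x - zenum_mod n j) +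
  (if Nat.even j then Nat.b2n (O n =? 2) else 1 - Nat.b2n (O n =? 2)).

Lemma lift_test_spec O n j x :
  lift_test O n j x = 0 <-> zenum_mod n j = x /\ (O n = 2 <-> Nat.even j = false).
Proof.
  unfold lift_test. destruct (Nat.even j), (Nat.eqb_spec (O n) 2); cbn [Nat.b2n];
    split; try intuition lia; intros [H1 H2]; try discriminate (proj1 H2 e); intuition lia.
Qed.

Section Decoding.
Variables (b r : nat -> nat) (c : config).
Hypotheses (Hb : binary b) (Hr : two_adic r) (Hc : toeplitz b r c).

(* Symbols at even levels are [2], at odd levels they are not: a position of the
   class of [r j] whose symbol does not fit level [j] lies in the class of [r (S j)]. *)
Lemma congr_at_succ_of_parity z j :
  congr_at r z j -> (c z = 2 <-> Nat.even j = false) -> congr_at r z (S j).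
Proof.
  intros Hj Hpar. apply NNPP. intros C.
  assert (HL : c z = symbol b j) by (apply Hc; split; auto).
  destruct (Nat.even j) eqn:E.
  - rewrite HL, symbol_even in Hpar by auto. now specialize (proj1 Hpar eq_refl).
  - pose proof (symbol_odd b Hb j E). specialize (proj2 Hpar eq_refl). lia.
Qed.

Lemma parity_witness j :
  exists w, congr_at r (Z.of_nat w) j /\ (c (Z.of_nat w) = 2 <-> Nat.even j = false).
Proof.
  exists (level_witness r (S j)). pose proof (level_witness_spec r (S j) Hr) as HL.
  split; [apply (congr_at_le r Hr _ j (S j)); [lia|apply HL]|].
  rewrite (Hc _ _ HL). destruct (Nat.even j) eqn:E.
  - assert (Nat.even (S j) = false) by (rewrite Nat.even_succ, <- Nat.negb_even, E; auto).
    pose proof (symbol_odd b Hb (S j) H). split; [lia|discriminate].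
  - rewrite symbol_even by (rewrite Nat.even_succ, <- Nat.negb_even, E; auto). tauto.
Qed.

Lemma toeplitz_skeleton_computable : computable (code c) 1 (fun v => r (nth 0 v 0)).
Proof.
  set (O := code c).
  set (Q v := nth 1 v 0 = r (nth 0 v 0)).
  assert (Htest : computable O 3 (fun u => lift_test O (nth 0 u 0) (nth 1 u 0) (nth 2 u 0))).
  { pose proof (computable_zenum_mod O). unfold lift_test. computable_tac. }
  destruct (computable_on_search O 2 _ Q _ Htest) as [h [Hh Hh0]].
  { intros v Hl HQ. split; [auto|].
    destruct (parity_witness (nth 0 v 0)) as [w [Hw1 Hw2]].
    exists (2 * w). apply lift_test_spec. cbn [nth]. unfold O, code. rewrite zenum_double.
    split; [|exact Hw2]. rewrite HQ. apply congr_at_zenum. now rewrite zenum_double. }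
  assert (Hstep : forall j, zenum_mod (h [j; r j]) (S j) = r (S j)).
  { intros j. specialize (Hh0 [j; r j] eq_refl eq_refl). apply lift_test_spec in Hh0.
    destruct Hh0 as [H1 H2]. apply congr_at_zenum, congr_at_succ_of_parity; auto.
    now apply congr_at_zenum. }
  set (next v := zenum_mod (h v) (S (nth 0 v 0))).
  assert (Hnext : computable_on O 2 Q next).
  { pose proof (computable_zenum_mod O). unfold next. computable_tac. }
  assert (Hrec : forall j, primrec (fun _ => 0) next j [] = r j).
  { induction j as [|j IH]; simpl; [now rewrite two_adic_0|]. rewrite IH. apply Hstep. }
  eapply computable_on_ext.
  - apply (computable_on_primrec O 0 (fun _ => True) Q _ _
             (computable_on_const O 0 (fun _ => True) 0) Hnext).
  - intros v Hl _. rewrite (length1 v Hl). simpl. rewrite Hrec. split; [|auto].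
    split; [auto|]. intros m _. unfold Q. simpl. now rewrite Hrec.
Qed.

End Decoding.

Fixpoint graph_count (F : nat -> nat) (m i : nat) : nat :=
  match m with 0 => 0 | S m => graph_count F m i + Nat.b2n (to_nat (m, F m) =? i) end.

(* Only pairs [(n, F n)] with [n <= i] can have code [i], as [n <= to_nat (n, m)]. *)
Definition graph_bits (F : nat -> nat) (i : nat) : nat := graph_count F (S i) i.

Lemma graph_count_spec F m i :
  (graph_count F m i = 0 /\ forall n, n < m -> to_nat (n, F n) <> i) \/
  (graph_count F m i = 1 /\ exists n, n < m /\ to_nat (n, F n) = i).
Proof.
  induction m as [|m IH]; cbn [graph_count]; [left; split; [auto|lia]|].
  destruct (Nat.eqb_spec (to_nat (m, F m)) i) as [E|E]; cbn [Nat.b2n].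
  - destruct IH as [[H1 H2]|[H1 [n [Hn Hn']]]].
    + right. split; [lia|]. exists m. split; auto.
    + exfalso. rewrite <- E in Hn'. apply to_nat_inj in Hn'. injection Hn'. lia.
  - destruct IH as [[H1 H2]|[H1 [n [Hn Hn']]]].
    + left. split; [lia|]. intros n Hn. destruct (Nat.eq_dec n m) as [->|]; auto.
      apply H2; lia.
    + right. split; [lia|]. exists n. split; [lia|auto].
Qed.

Lemma graph_bits_binary F : binary (graph_bits F).
Proof.
  intros i. unfold graph_bits. destruct (graph_count_spec F (S i) i) as [[-> _]|[-> _]]; lia.
Qed.

Lemma graph_bits_to_nat F n m : graph_bits F (to_nat (n, m)) = Nat.b2n (F n =? m).
Proof.
  unfold graph_bits. set (i := to_nat (n, m)).
  destruct (Nat.eqb_spec (F n) m) as [E|E];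
    destruct (graph_count_spec F (S i) i) as [[H1 H2]|[H1 [n' [Hn Hn']]]]; auto.
  - exfalso. apply (H2 n); [pose proof (to_nat_non_decreasing n m); unfold i; lia|].
    now rewrite E.
  - exfalso. apply to_nat_inj in Hn'. injection Hn' as Hnn Hm. subst. auto.
Qed.

Lemma computable_graph_bits o F :
  computable o 1 (fun v => F (nth 0 v 0)) -> computable o 1 (fun v => graph_bits F (nth 0 v 0)).
Proof.
  intros HF.
  assert (Hcount : computable o 2 (fun v => graph_count F (nth 0 v 0) (nth 1 v 0))).
  { apply (computable_primrec1 o (graph_count F) (fun _ => 0)
             (fun m r i => r + Nat.b2n (to_nat (m, F m) =? i))); auto; computable_tac. }
  unfold graph_bits. computable_tac.
Qed.

Lemma computable_of_graph_bits o F :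
  computable o 1 (fun v => graph_bits F (nth 0 v 0)) -> computable o 1 (fun v => F (nth 0 v 0)).
Proof.
  intros Hbits.
  apply (computable_on_mu o 1 (fun _ => True) _
           (fun u => 1 - graph_bits F (to_nat (nth 1 u 0, nth 0 u 0)))); [computable_tac|].
  intros v _ _. cbn [nth]. split; [auto|].
  rewrite graph_bits_to_nat, Nat.eqb_refl. split; [auto|].
  intros m Hm. rewrite graph_bits_to_nat. destruct (Nat.eqb_spec (F (nth 0 v 0)) m); simpl; lia.
Qed.

Lemma toeplitz_subshift_computes b c : binary b -> toeplitz_subshift b c ->
  computable (code c) 1 (fun v => b (nth 0 v 0)).
Proof.
  intros Hb [_ [r [Hr Hc]]]. set (O := code c).
  assert (Hskel : computable O 1 (fun v => r (nth 0 v 0)))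
    by now apply (toeplitz_skeleton_computable b r c).
  apply (computable_on_eq _ _ _ _ (fun v => O (2 * level_witness r (4 * nth 0 v 0 + 1)))).
  - intros v. unfold O, code. rewrite zenum_double, (Hc _ _ (level_witness_spec r _ Hr)).
    symmetry. apply symbol_4m1.
  - unfold level_witness. computable_tac.
Qed.

Lemma adic_of_bits_digit g i : binary g -> adic_of_bits g (2 * i + 1) / 2 ^ (2 * i) = g i.
Proof.
  intros Hg. replace (2 * i + 1) with (S (2 * i)) by lia. cbn [adic_of_bits].
  rewrite adic_digit_even. symmetry. apply Nat.div_unique with (adic_of_bits g (2 * i)); [|lia].
  apply (adic_of_bits_two_adic g Hg).
Qed.

Lemma toeplitz_point_computes_bits b g : binary b -> binary g ->
  computable (code (toeplitz_point b g)) 1 (fun v => g (nth 0 v 0)).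
Proof.
  intros Hb Hg.
  pose proof (toeplitz_skeleton_computable b (adic_of_bits g) (toeplitz_point b g) Hb
    (adic_of_bits_two_adic g Hg) (toeplitz_point_toeplitz b g Hg)) as Hskel.
  apply (computable_on_eq _ _ _ _ (fun v => adic_of_bits g (2 * nth 0 v 0 + 1) / 2 ^ (2 * nth 0 v 0))).
  - intros v. symmetry. now apply adic_of_bits_digit.
  - computable_tac.
Qed.

Lemma toeplitz_point_computable o b g : binary g ->
  computable o 1 (fun v => b (nth 0 v 0)) -> computable o 1 (fun v => g (nth 0 v 0)) ->
  turing_le (code (toeplitz_point b g)) o.
Proof.
  intros Hg Hbo Hgo.
  assert (Hadic : computable o 1 (fun v => adic_of_bits g (nth 0 v 0))).
  { apply (computable_primrec0 o (adic_of_bits g) 0 (fun j a => a + adic_digit g j * 2 ^ j));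
      auto. unfold adic_digit. computable_tac. }
  set (lev n := bits_level g (zenum n)).
  assert (Hlev : computable o 1 (fun v => lev (nth 0 v 0))).
  { pose proof (computable_zenum_mod o).
    apply (computable_on_mu o 1 (fun _ => True) _ (fun u => Nat.b2n
      (zenum_mod (nth 1 u 0) (S (nth 0 u 0)) =? adic_of_bits g (S (nth 0 u 0)))));
      [computable_tac|].
    intros v _ _. cbn [nth]. split; [auto|].
    destruct (bits_level_spec g (zenum (nth 0 v 0)) Hg) as [H1 H2]. split.
    - destruct (Nat.eqb_spec (zenum_mod (nth 0 v 0) (S (lev (nth 0 v 0))))
                 (adic_of_bits g (S (lev (nth 0 v 0))))) as [E|E]; auto.
      exfalso. now apply H2, congr_at_zenum.
    - intros m Hm. rewrite (proj1 (congr_at_zenum (adic_of_bits g) (nth 0 v 0) (S m))), Nat.eqb_refl; [discriminate|].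
      apply (congr_at_le _ (adic_of_bits_two_adic g Hg) _ (S m) (lev (nth 0 v 0))); auto. }
  apply turing_le_of_computable.
  apply (computable_on_eq _ _ _ _ (fun v => symbol b (lev (nth 0 v 0)))); [reflexivity|].
  unfold symbol. computable_tac.
Qed.

Theorem theorem2 :
  forall D : nat -> nat,
  exists (k : nat) (X : config -> Prop),
    minimal_subshift k X /\
    (forall c : config, X c -> turing_le D (code c)) /\
    (forall E : nat -> nat, turing_le D E ->
       exists c : config, X c /\ turing_eq (code c) E).
Proof.
  intros D. set (b := graph_bits D). pose proof (graph_bits_binary D) as Hb.
  exists 3, (toeplitz_subshift b). split; [|split].
  - split; [split; [|split]|split].
    + now intros c [Hc _].
    + now apply toeplitz_subshift_closed.
    + intros v c. apply toeplitz_subshift_shift.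
    + exists (toeplitz_point b b). now apply toeplitz_point_in_subshift.
    + now apply toeplitz_subshift_minimal.
  - intros c Hc. apply turing_le_of_computable, computable_of_graph_bits.
    now apply toeplitz_subshift_computes.
  - intros E HDE. set (g := graph_bits E). pose proof (graph_bits_binary E) as Hg.
    exists (toeplitz_point b g). split; [now apply toeplitz_point_in_subshift|split].
    + apply toeplitz_point_computable; auto; apply computable_graph_bits.
      * now apply computable_of_turing_le.
      * computable_tac.
    + apply turing_le_of_computable, computable_of_graph_bits.
      now apply toeplitz_point_computes_bits.
Qed.
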